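(* Let $\gamma_1,\dots,\gamma_k$ be distinct real numbers, and for a natural number $N$ and real $x$ define \[A_N(x)=\lim_{T\to\infty}\frac1{2T}\int_{-T}^T|1+e^{it\gamma_1}+\cdots+e^{it\gamma_k}|^{2N}e^{itx}\,\mathrm dt.\] (a) $A_N(0)\gg_k(k+1)^{2N}N^{-k/2}$. (b) Let $\varepsilon>0$ and $j\in\{1,\dots,k\}$. If $N$ is large enough in terms of $\varepsilon$ and $k$, then $A_N(\gamma_j)\ge(1-\varepsilon)A_N(0)$. *)

From Stdlib Require Import Reals Lra List.
From Coquelicot Require Import Coquelicot.
Open Scope R_scope.

(* Frequencies gamma_1..gamma_k are encoded as gam 0, ..., gam (k-1). *)
Definition rsum (k : nat) (f : nat -> R) : R :=
  fold_right Rplus 0 (map f (seq 0 k)).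

(* P(t) = 1 + e^{i t gam_1} + ... + e^{i t gam_k}, written via real and imaginary parts. *)
Definition P_re (k : nat) (gam : nat -> R) (t : R) : R :=
  1 + rsum k (fun j => cos (t * gam j)).
Definition P_im (k : nat) (gam : nat -> R) (t : R) : R :=
  rsum k (fun j => sin (t * gam j)).

Definition Pabs2N (k : nat) (gam : nat -> R) (N : nat) (t : R) : R :=
  (P_re k gam t ^ 2 + P_im k gam t ^ 2) ^ N.

Definition avg_re (k : nat) (gam : nat -> R) (N : nat) (x T : R) : R :=
  / (2 * T) * RInt (fun t => Pabs2N k gam N t * cos (t * x)) (- T) T.
Definition avg_im (k : nat) (gam : nat -> R) (N : nat) (x T : R) : R :=
  / (2 * T) * RInt (fun t => Pabs2N k gam N t * sin (t * x)) (- T) T.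

(* A_N(x) = L : the complex limit as T -> +oo of the average exists and equals
   the (real) number L, i.e. real part -> L and imaginary part -> 0. *)
Definition A_N_is (k : nat) (gam : nat -> R) (N : nat) (x L : R) : Prop :=
  is_lim (avg_re k gam N x) p_infty L /\ is_lim (avg_im k gam N x) p_infty 0.

Definition distinct_freqs (k : nat) (gam : nat -> R) : Prop :=
  forall i j : nat, (i < k)%nat -> (j < k)%nat -> i <> j -> gam i <> gam j.

(* Expanding |P(t)|^{2N} = |P(t)^N|^2 over the (k+1)^N words of length N in the letters 0..k,
   letter 0 carrying the frequency 0 and letter i+1 the frequency gamma_i, the time average
   A_N(x) is the number of pairs of words (u, v) whose total frequencies differ by x.
   (a) By Chebyshev, for at least half of the words every letter count lies within 3 sqrt N of
   N/(k+1). Such words fall into O(sqrt N)^k classes of equal count vectors, and all pairs inside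
   a class collide, so Cauchy-Schwarz gives A_N(0) >= ((k+1)^N / 2)^2 / O(sqrt N)^k.
   (b) Replacing one letter 0 by the letter j+1 shifts the frequency by gamma_j; double counting
   these replacements, the pairs counted by A_N(0) weighted by the number of 0s in u have the same
   total as the pairs counted by A_N(gamma_j) weighted by the number of (j+1)s in u. By Chernoff
   bounds both counts are (1 +- d) N/(k+1) outside an exponentially small set of words, which is
   negligible against (a); hence A_N(gamma_j) >= (1 - 3d) A_N(0). *)

From Stdlib Require Import Reals Lra Lia Arith List.
From Coquelicot Require Import Coquelicot.
Open Scope R_scope.

(** * Finite sums over lists *)

Definition lsum {A} (l : list A) (f : A -> R) : R := fold_right Rplus 0 (map f l).

Lemma lsum_app {A} (l1 l2 : list A) f : lsum (l1 ++ l2) f = lsum l1 f + lsum l2 f.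
Proof. induction l1 as [|a l1 IH]; unfold lsum in *; simpl; [lra|]. rewrite IH; lra. Qed.

Lemma lsum_ext {A} (l : list A) f g : (forall a, In a l -> f a = g a) -> lsum l f = lsum l g.
Proof. intros H. unfold lsum. f_equal. apply map_ext_in, H. Qed.

Lemma lsum_plus {A} (l : list A) f g : lsum l (fun a => f a + g a) = lsum l f + lsum l g.
Proof. induction l as [|a l IH]; unfold lsum in *; simpl; [lra|]. rewrite IH; lra. Qed.

Lemma lsum_minus {A} (l : list A) f g : lsum l (fun a => f a - g a) = lsum l f - lsum l g.
Proof. induction l as [|a l IH]; unfold lsum in *; simpl; [lra|]. rewrite IH; lra. Qed.

Lemma lsum_scal {A} (l : list A) c f : lsum l (fun a => c * f a) = c * lsum l f.
Proof. induction l as [|a l IH]; unfold lsum in *; simpl; [lra|]. rewrite IH; lra. Qed.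

Lemma lsum_scalr {A} (l : list A) c f : lsum l (fun a => f a * c) = lsum l f * c.
Proof. induction l as [|a l IH]; unfold lsum in *; simpl; [lra|]. rewrite IH; lra. Qed.

Lemma lsum_const {A} (l : list A) c : lsum l (fun _ => c) = INR (length l) * c.
Proof.
  induction l as [|a l IH]; unfold lsum in *; simpl length; [simpl; lra|].
  rewrite S_INR; simpl; rewrite IH; lra.
Qed.

Lemma lsum_le {A} (l : list A) f g : (forall a, In a l -> f a <= g a) -> lsum l f <= lsum l g.
Proof.
  induction l as [|a l IH]; intros H; unfold lsum in *; simpl; [lra|].
  apply Rplus_le_compat; [apply H; left | apply IH; intros; apply H; right]; auto.
Qed.

Lemma lsum_nonneg {A} (l : list A) f : (forall a, In a l -> 0 <= f a) -> 0 <= lsum l f.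
Proof.
  intros H. replace 0 with (lsum l (fun _ => 0)) by (rewrite lsum_const; ring).
  now apply lsum_le.
Qed.

Lemma lsum_swap {A B} (l1 : list A) (l2 : list B) f :
  lsum l1 (fun a => lsum l2 (fun b => f a b)) = lsum l2 (fun b => lsum l1 (fun a => f a b)).
Proof.
  induction l1 as [|a l1 IH].
  - rewrite (lsum_ext l2 _ (fun _ => 0)) by reflexivity. rewrite lsum_const.
    unfold lsum at 1; simpl; ring.
  - change (lsum (a :: l1) ?g) with (g a + lsum l1 g). rewrite IH, <- lsum_plus.
    reflexivity.
Qed.

Lemma lsum_flat_map {A B} (l : list A) (g : A -> list B) f :
  lsum (flat_map g l) f = lsum l (fun a => lsum (g a) f).
Proof. induction l as [|a l IH]; simpl; [reflexivity|]. rewrite lsum_app, IH. reflexivity. Qed.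

Lemma lsum_map {A B} (l : list A) (g : A -> B) f : lsum (map g l) f = lsum l (fun a => f (g a)).
Proof. unfold lsum. now rewrite map_map. Qed.

Lemma lsum_mult {A B} (l1 : list A) (l2 : list B) f g :
  lsum l1 f * lsum l2 g = lsum l1 (fun a => lsum l2 (fun b => f a * g b)).
Proof. rewrite <- lsum_scalr. apply lsum_ext; intros. now rewrite <- lsum_scal. Qed.

Lemma cauchy_schwarz_lsum {A} (l : list A) f :
  lsum l f ^ 2 <= INR (length l) * lsum l (fun a => f a ^ 2).
Proof.
  assert (H : 0 <= lsum l (fun a => lsum l (fun b => (f a - f b) ^ 2))).
  { apply lsum_nonneg; intros; apply lsum_nonneg; intros; apply pow2_ge_0. }
  assert (E : lsum l (fun a => lsum l (fun b => (f a - f b) ^ 2)) =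
              2 * (INR (length l) * lsum l (fun a => f a ^ 2)) - 2 * lsum l f ^ 2).
  { rewrite (lsum_ext l _ (fun a => INR (length l) * f a ^ 2 + lsum l (fun b => f b ^ 2)
                                   - 2 * lsum l f * f a)).
    - rewrite lsum_minus, lsum_plus, lsum_const, !lsum_scal. ring.
    - intros a _. rewrite (lsum_ext l _ (fun b => f a ^ 2 + f b ^ 2 - 2 * f a * f b))
        by (intros; ring).
      rewrite lsum_minus, lsum_plus, lsum_const, lsum_scal. ring. }
  lra.
Qed.

Lemma lsum_seq_S k f : lsum (seq 0 (S k)) f = f O + lsum (seq 0 k) (fun j => f (S j)).
Proof.
  change (lsum (seq 0 (S k)) f) with (f O + lsum (seq 1 k) f).
  now rewrite <- seq_shift, lsum_map.
Qed.

Definition ind_eq (a b : nat) : R := if Nat.eq_dec a b then 1 else 0.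

Lemma lsum_ind_eq n b F :
  lsum (seq 0 n) (fun i => ind_eq i b * F i) = if lt_dec b n then F b else 0.
Proof.
  induction n as [|n IH]; [destruct (lt_dec b 0); [lia|reflexivity]|].
  rewrite seq_S, lsum_app, IH, Nat.add_0_l. unfold ind_eq; cbn [lsum map fold_right].
  destruct (Nat.eq_dec n b), (lt_dec b n), (lt_dec b (S n)); subst; try lia; lra.
Qed.

Lemma lsum_ind_eq_split q b (F : nat -> R) A0 : (b < q)%nat ->
  lsum (seq 0 q) (fun i => ind_eq i b * A0 + F i) = A0 + lsum (seq 0 q) F.
Proof.
  intros Hb. rewrite lsum_plus, (lsum_ind_eq q b (fun _ => A0)). now destruct (lt_dec b q).
Qed.

(** * Words and the mean value A_N *)

Notation occ u b := (count_occ Nat.eq_dec u b).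

Lemma INR_occ_cons i w b : INR (occ (i :: w) b) = ind_eq i b + INR (occ w b).
Proof. unfold ind_eq; simpl. destruct (Nat.eq_dec i b); [rewrite S_INR|]; lra. Qed.

Lemma lsum_occ q (u : list nat) f : List.Forall (fun i => (i < q)%nat) u ->
  lsum u f = lsum (seq 0 q) (fun i => INR (occ u i) * f i).
Proof.
  induction 1 as [|a u Ha _ IH].
  - rewrite (lsum_ext (seq 0 q) _ (fun _ => 0)) by (intros i _; simpl; ring).
    rewrite lsum_const. unfold lsum at 1; simpl; ring.
  - change (lsum (a :: u) f) with (f a + lsum u f). rewrite IH.
    rewrite (lsum_ext (seq 0 q) (fun i => INR (occ (a :: u) i) * f i)
                      (fun i => ind_eq i a * f a + INR (occ u i) * f i)).
    + now rewrite (lsum_ind_eq_split q a _ _ Ha).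
    + intros i _. rewrite INR_occ_cons. unfold ind_eq.
      destruct (Nat.eq_dec a i), (Nat.eq_dec i a); subst; try congruence; ring.
Qed.

Fixpoint words (q N : nat) : list (list nat) :=
  match N with
  | O => nil :: nil
  | S n => flat_map (fun w => map (fun i => i :: w) (seq 0 q)) (words q n)
  end.

Lemma lsum_words_0 q f : lsum (words q 0) f = f nil.
Proof. unfold lsum; simpl; ring. Qed.

Lemma lsum_words_S q n f :
  lsum (words q (S n)) f = lsum (words q n) (fun w => lsum (seq 0 q) (fun i => f (i :: w))).
Proof. simpl. rewrite lsum_flat_map. apply lsum_ext; intros. now rewrite lsum_map. Qed.

Lemma in_words q N u : In u (words q N) -> length u = N /\ List.Forall (fun i => (i < q)%nat) u.
Proof.
  revert u; induction N as [|N IH]; simpl; intros u Hu.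
  - destruct Hu as [<- | []]. auto.
  - apply in_flat_map in Hu as [w [Hw Hu]]. apply in_map_iff in Hu as [i [<- Hi]].
    apply in_seq in Hi. destruct (IH w Hw). simpl; split; auto. constructor; auto; lia.
Qed.

Lemma length_words q N : INR (length (words q N)) = INR q ^ N.
Proof.
  rewrite <- (Rmult_1_r (INR _)), <- lsum_const.
  induction N as [|N IH]; [rewrite lsum_words_0; simpl; ring|].
  rewrite lsum_words_S, (lsum_ext _ _ (fun _ => INR q)).
  - rewrite lsum_const, <- (Rmult_1_r (INR (length _))), <- lsum_const, IH. simpl; ring.
  - intros; rewrite lsum_const, length_seq; ring.
Qed.

Definition letter_freq (gam : nat -> R) (i : nat) : R :=
  match i with O => 0 | S j => gam j end.

Definition word_freq (gam : nat -> R) (u : list nat) : R := lsum u (letter_freq gam).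

Lemma P_re_letters k gam t :
  P_re k gam t = lsum (seq 0 (S k)) (fun i => cos (t * letter_freq gam i)).
Proof. rewrite lsum_seq_S. simpl letter_freq. now rewrite Rmult_0_r, cos_0. Qed.

Lemma P_im_letters k gam t :
  P_im k gam t = lsum (seq 0 (S k)) (fun i => sin (t * letter_freq gam i)).
Proof. rewrite lsum_seq_S. simpl letter_freq. now rewrite Rmult_0_r, sin_0, Rplus_0_l. Qed.

Lemma Pabs2N_words k gam N t :
  Pabs2N k gam N t =
  lsum (words (S k) N) (fun u => cos (t * word_freq gam u)) ^ 2 +
  lsum (words (S k) N) (fun u => sin (t * word_freq gam u)) ^ 2.
Proof.
  unfold Pabs2N. induction N as [|N IH].
  - rewrite !lsum_words_0. unfold word_freq, lsum; simpl. rewrite Rmult_0_r, cos_0, sin_0. ring.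
  - set (C := lsum (words (S k) N) (fun u => cos (t * word_freq gam u))) in IH.
    set (S' := lsum (words (S k) N) (fun u => sin (t * word_freq gam u))) in IH.
    assert (HC : lsum (words (S k) (S N)) (fun u => cos (t * word_freq gam u))
                 = P_re k gam t * C - P_im k gam t * S').
    { rewrite lsum_words_S, P_re_letters, P_im_letters.
      unfold C, S'. rewrite <- !lsum_scal, <- lsum_minus. apply lsum_ext; intros w _.
      rewrite <- !lsum_scalr, <- lsum_minus. apply lsum_ext; intros i _.
      change (word_freq gam (i :: w)) with (letter_freq gam i + word_freq gam w).
      rewrite Rmult_plus_distr_l, cos_plus. ring. }
    assert (HS : lsum (words (S k) (S N)) (fun u => sin (t * word_freq gam u))
                 = P_im k gam t * C + P_re k gam t * S').
    { rewrite lsum_words_S, P_re_letters, P_im_letters.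
      unfold C, S'. rewrite <- !lsum_scal, <- lsum_plus. apply lsum_ext; intros w _.
      rewrite <- !lsum_scalr, <- lsum_plus. apply lsum_ext; intros i _.
      change (word_freq gam (i :: w)) with (letter_freq gam i + word_freq gam w).
      rewrite Rmult_plus_distr_l, sin_plus. ring. }
    rewrite HC, HS, <- tech_pow_Rmult, IH. ring.
Qed.

Lemma Pabs2N_pairs k gam N t :
  Pabs2N k gam N t = lsum (words (S k) N) (fun u => lsum (words (S k) N) (fun v =>
                       cos (t * (word_freq gam u - word_freq gam v)))).
Proof.
  rewrite Pabs2N_words. simpl pow. rewrite !Rmult_1_r, !lsum_mult, <- lsum_plus.
  apply lsum_ext; intros u _. rewrite <- lsum_plus. apply lsum_ext; intros v _.
  rewrite Rmult_minus_distr_l, cos_minus. ring.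
Qed.

Definition kronecker (w : R) : R := if Req_EM_T w 0 then 1 else 0.

Lemma kronecker_bounds w : 0 <= kronecker w <= 1.
Proof. unfold kronecker. destruct (Req_EM_T w 0); lra. Qed.

Lemma kronecker_opp w : kronecker (- w) = kronecker w.
Proof. unfold kronecker. destruct (Req_EM_T (- w) 0), (Req_EM_T w 0); lra. Qed.

(* The integrals over [-T, T] are carried as a witness, so that sums of mean values need no
   separate integrability argument. *)
Definition has_mean (f : R -> R) (m : R) : Prop :=
  exists I : R -> R, (forall T, is_RInt f (- T) T (I T)) /\
                     is_lim (fun T => / (2 * T) * I T) p_infty m.

Lemma has_mean_is_lim f m :
  has_mean f m -> is_lim (fun T => / (2 * T) * RInt f (- T) T) p_infty m.
Proof.
  intros [I [HI Hlim]]. eapply is_lim_ext; [|exact Hlim].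
  intros T. now rewrite (is_RInt_unique _ _ _ _ (HI T)).
Qed.

Lemma has_mean_ext f g m m' :
  (forall t, f t = g t) -> m = m' -> has_mean f m -> has_mean g m'.
Proof.
  intros Hfg <- [I [HI Hlim]]. exists I. split; auto.
  intros T. eapply is_RInt_ext; [|apply HI]. auto.
Qed.

Lemma has_mean_plus f g mf mg :
  has_mean f mf -> has_mean g mg -> has_mean (fun t => f t + g t) (mf + mg).
Proof.
  intros [I [HI LI]] [J [HJ LJ]]. exists (fun T => I T + J T). split.
  - intros T. apply (is_RInt_plus (V := R_NormedModule)); auto.
  - eapply is_lim_ext; [|exact (is_lim_plus' _ _ _ _ _ LI LJ)]. intros T; simpl; ring.
Qed.

Lemma has_mean_scal c f m : has_mean f m -> has_mean (fun t => c * f t) (c * m).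
Proof.
  intros [I [HI LI]]. exists (fun T => c * I T). split.
  - intros T. apply (is_RInt_scal (V := R_NormedModule)); auto.
  - eapply is_lim_ext; [|exact (is_lim_scal_l _ c _ _ LI)]. intros T; simpl; ring.
Qed.

Lemma has_mean_zero : has_mean (fun _ => 0) 0.
Proof.
  exists (fun _ => 0). split.
  - intros T. pose proof (is_RInt_const (- T) T 0) as H.
    change (scal (T - - T) 0) with ((T - - T) * 0) in H. now rewrite Rmult_0_r in H.
  - eapply is_lim_ext; [|apply is_lim_const]. intros T; simpl; ring.
Qed.

Lemma has_mean_lsum {A} (l : list A) (F : A -> R -> R) (M : A -> R) :
  (forall a, has_mean (F a) (M a)) -> has_mean (fun t => lsum l (fun a => F a t)) (lsum l M).
Proof.
  intros H. induction l as [|a l IH]; [exact has_mean_zero|].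
  exact (has_mean_plus _ _ _ _ (H a) IH).
Qed.

Lemma has_mean_cos w : has_mean (fun t => cos (t * w)) (kronecker w).
Proof.
  unfold kronecker. destruct (Req_EM_T w 0) as [-> | Hw].
  - exists (fun T => 2 * T). split.
    + intros T. pose proof (is_RInt_const (- T) T 1) as H.
      change (scal (T - - T) 1) with ((T - - T) * 1) in H.
      replace ((T - - T) * 1) with (2 * T) in H by ring.
      eapply is_RInt_ext; [|exact H]. intros t _. now rewrite Rmult_0_r, cos_0.
    + eapply is_lim_ext_loc; [|apply is_lim_const].
      exists 0. intros T HT. field. lra.
  - exists (fun T => 2 * sin (T * w) / w). split.
    + intros T. replace (2 * sin (T * w) / w) with (minus (sin (T * w) / w) (sin (- T * w) / w)).
      * apply (is_RInt_derive (fun t => sin (t * w) / w)).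
        -- intros x _. auto_derive; auto. field; auto.
        -- intros x _. apply (@ex_derive_continuous R_AbsRing R_NormedModule). auto_derive; auto.
      * unfold minus, plus, opp; simpl. replace (- T * w) with (- (T * w)) by ring.
        rewrite sin_neg. field; auto.
    + assert (Ha : 0 < Rabs w) by (apply Rabs_pos_lt; auto).
      assert (L : is_lim (fun T => / Rabs w * / T) p_infty 0).
      { replace (Finite 0) with (Rbar_mult (/ Rabs w) (Rbar_inv p_infty)) by (simpl; f_equal; ring).
        apply is_lim_scal_l. apply is_lim_inv; [apply is_lim_id | discriminate]. }
      apply (is_lim_le_le_loc (fun T => - (/ Rabs w * / T)) (fun T => / Rabs w * / T)).
      * exists 0. intros T HT.
        assert (E : / (2 * T) * (2 * sin (T * w) / w)
                    = / (Rabs w * T) * (sin (T * w) * (Rabs w / w))).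
        { assert (Rabs w <> 0) by lra. field; split; lra. }
        rewrite E, Rinv_mult.
        assert (Hs := SIN_bound (T * w)).
        assert (Hr : Rabs w / w = 1 \/ Rabs w / w = -1).
        { unfold Rabs. destruct (Rcase_abs w); [right|left]; field; auto. }
        assert (0 < / Rabs w * / T) by (apply Rmult_lt_0_compat; apply Rinv_0_lt_compat; lra).
        destruct Hr as [-> | ->]; split; nra.
      * replace (Finite 0) with (Rbar_opp 0) by (simpl; f_equal; ring). now apply is_lim_opp.
      * exact L.
Qed.

Lemma has_mean_sin w : has_mean (fun t => sin (t * w)) 0.
Proof.
  destruct (Req_EM_T w 0) as [-> | Hw].
  - eapply has_mean_ext; [|reflexivity|exact has_mean_zero]. intros t. now rewrite Rmult_0_r, sin_0.
  - exists (fun _ => 0). split.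
    + intros T. replace 0 with (minus (- cos (T * w) / w) (- cos (- T * w) / w)).
      * apply (is_RInt_derive (fun t => - cos (t * w) / w)).
        -- intros x _. auto_derive; auto. field; auto.
        -- intros x _. apply (@ex_derive_continuous R_AbsRing R_NormedModule). auto_derive; auto.
      * unfold minus, plus, opp; simpl. replace (- T * w) with (- (T * w)) by ring.
        rewrite cos_neg. field; auto.
    + eapply is_lim_ext; [|apply is_lim_const]. intros T; simpl; ring.
Qed.

Definition collisions (k : nat) (gam : nat -> R) (N : nat) (y : R) : R :=
  lsum (words (S k) N) (fun u => lsum (words (S k) N) (fun v =>
    kronecker (word_freq gam u - word_freq gam v - y))).

Lemma collisions_nonneg k gam N y : 0 <= collisions k gam N y.
Proof. apply lsum_nonneg; intros; apply lsum_nonneg; intros; apply kronecker_bounds. Qed.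

Lemma collisions_opp k gam N y : collisions k gam N (- y) = collisions k gam N y.
Proof.
  unfold collisions. rewrite lsum_swap. apply lsum_ext; intros u _; apply lsum_ext; intros v _.
  rewrite <- kronecker_opp. f_equal. ring.
Qed.

Lemma A_N_is_collisions k gam N x : A_N_is k gam N x (collisions k gam N x).
Proof.
  set (W := words (S k) N). set (D u v := word_freq gam u - word_freq gam v).
  split; apply has_mean_is_lim.
  - apply (has_mean_ext
      (fun t => lsum W (fun u => lsum W (fun v =>
         / 2 * cos (t * (D u v - x)) + / 2 * cos (t * (D u v - - x)))))
      _ (lsum W (fun u => lsum W (fun v =>
         / 2 * kronecker (D u v - x) + / 2 * kronecker (D u v - - x)))) _).
    + intros t. rewrite Pabs2N_pairs, <- lsum_scalr. apply lsum_ext; intros u _.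
      rewrite <- lsum_scalr. apply lsum_ext; intros v _. fold (D u v).
      replace (t * (D u v - x)) with (t * D u v - t * x) by ring.
      replace (t * (D u v - - x)) with (t * D u v + t * x) by ring.
      rewrite cos_minus, cos_plus. field.
    + transitivity (/ 2 * collisions k gam N x + / 2 * collisions k gam N (- x)).
      * unfold collisions. fold W. rewrite <- !lsum_scal, <- lsum_plus.
        apply lsum_ext; intros u _. rewrite <- !lsum_scal, <- lsum_plus. reflexivity.
      * rewrite collisions_opp. field.
    + apply has_mean_lsum; intros u; apply has_mean_lsum; intros v.
      apply has_mean_plus; apply has_mean_scal, has_mean_cos.
  - apply (has_mean_ext
      (fun t => lsum W (fun u => lsum W (fun v =>
         / 2 * sin (t * (x + D u v)) + / 2 * sin (t * (x - D u v)))))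
      _ (lsum W (fun u => lsum W (fun v => / 2 * 0 + / 2 * 0))) _).
    + intros t. rewrite Pabs2N_pairs, <- lsum_scalr. apply lsum_ext; intros u _.
      rewrite <- lsum_scalr. apply lsum_ext; intros v _. fold (D u v).
      rewrite Rmult_plus_distr_l, Rmult_minus_distr_l, sin_plus, sin_minus. field.
    + rewrite (lsum_ext W _ (fun _ => 0)), lsum_const; [ring|].
      intros u _. rewrite (lsum_ext W _ (fun _ => 0)), lsum_const; [ring|]. intros; ring.
    + apply has_mean_lsum; intros u; apply has_mean_lsum; intros v.
      apply has_mean_plus; apply has_mean_scal, has_mean_sin.
Qed.

(** * Typical words and the lower bound for A_N(0) *)

Lemma lsum_words_occ_variance q N b : (b < q)%nat ->
  lsum (words q N) (fun u => (INR q * INR (occ u b) - INR N) ^ 2) = INR q ^ N * INR N * (INR q - 1).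
Proof.
  intros Hb. induction N as [|N IH]; [rewrite lsum_words_0; simpl; ring|].
  rewrite lsum_words_S.
  rewrite (lsum_ext _ _ (fun w =>
    INR q * (INR q * INR (occ w b) - INR N) ^ 2 + INR q * (INR q - 1))).
  - rewrite lsum_plus, lsum_scal, IH, lsum_const, length_words, S_INR. simpl; ring.
  - intros w _.
    rewrite (lsum_ext _ _ (fun i =>
      ind_eq i b * (2 * INR q * (INR q * INR (occ w b) - INR N) + INR q * INR q - 2 * INR q)
                                     + (INR q * INR (occ w b) - INR N - 1) ^ 2)).
    + rewrite (lsum_ind_eq_split q b _ _ Hb), lsum_const, length_seq. ring.
    + intros i _. rewrite INR_occ_cons, S_INR. unfold ind_eq. destruct (Nat.eq_dec i b); ring.
Qed.

Definition ind (b : bool) : R := if b then 1 else 0.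

Lemma one_minus_ind_forallb {A} (f : A -> bool) l :
  1 - ind (forallb f l) <= lsum l (fun a => 1 - ind (f a)).
Proof.
  induction l as [|a l IH]; [unfold lsum, ind; simpl; lra|].
  change (lsum (a :: l) ?g) with (g a + lsum l g). simpl forallb.
  assert (0 <= lsum l (fun a => 1 - ind (f a))).
  { apply lsum_nonneg; intros; unfold ind; destruct (f _); lra. }
  unfold ind in *; destruct (f a), (forallb f l); simpl; lra.
Qed.

Lemma collision_bound {A} (l : list A) (P : A -> bool) (key : A -> nat) (K : nat) :
  (forall a, P a = true -> (key a < K)%nat) ->
  lsum l (fun a => ind (P a)) ^ 2 <=
  INR K * lsum l (fun a => lsum l (fun b => ind (P a) * ind (P b) * ind_eq (key a) (key b))).
Proof.
  intros HK. set (F r a := ind (P a) * ind_eq r (key a)).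
  assert (Hrow : forall a G, lsum (seq 0 K) (fun r => F r a * G r) = ind (P a) * G (key a)).
  { intros a G. unfold F.
    rewrite (lsum_ext _ _ (fun r => ind_eq r (key a) * (ind (P a) * G r))) by (intros; ring).
    rewrite lsum_ind_eq. destruct (lt_dec (key a) K) as [_ | Hk]; [reflexivity|].
    destruct (P a) eqn:Pa; [exfalso; now apply Hk, HK | unfold ind; ring]. }
  assert (Hsplit : lsum l (fun a => ind (P a)) = lsum (seq 0 K) (fun r => lsum l (F r))).
  { rewrite lsum_swap. apply lsum_ext; intros a _.
    transitivity (ind (P a) * 1); [ring|]. rewrite <- (Hrow a (fun _ => 1)).
    apply lsum_ext; intros; ring. }
  rewrite Hsplit. eapply Rle_trans; [apply cauchy_schwarz_lsum|]. rewrite length_seq.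
  apply Rmult_le_compat_l; [apply pos_INR|]. apply Req_le.
  rewrite (lsum_ext _ _ (fun r => lsum l (fun a => lsum l (fun b => F r a * F r b))))
    by (intros; simpl; now rewrite Rmult_1_r, lsum_mult).
  rewrite lsum_swap. apply lsum_ext; intros a _. rewrite lsum_swap. apply lsum_ext; intros b _.
  rewrite (Hrow a (fun r => F r b)). unfold F; ring.
Qed.

Fixpoint from_digits (B : nat) (ds : list nat) : nat :=
  match ds with nil => O | d :: r => (d + B * from_digits B r)%nat end.

Lemma from_digits_lt B ds :
  List.Forall (fun d => (d < B)%nat) ds -> (from_digits B ds < B ^ length ds)%nat.
Proof. induction 1; simpl; nia. Qed.

Lemma from_digits_inj B ds1 ds2 :
  List.Forall (fun d => (d < B)%nat) ds1 -> List.Forall (fun d => (d < B)%nat) ds2 ->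
  length ds1 = length ds2 -> from_digits B ds1 = from_digits B ds2 -> ds1 = ds2.
Proof.
  revert ds2; induction ds1 as [|a r IH]; intros [|b r2] H1 H2 Hl He; simpl in *; try lia; auto.
  inversion H1; inversion H2; subst.
  assert (a = b /\ from_digits B r = from_digits B r2) as [-> E].
  { destruct (Nat.lt_total (from_digits B r) (from_digits B r2)) as [h|[h|h]]; nia. }
  f_equal. apply IH; auto.
Qed.

Lemma word_freq_occ k gam u : List.Forall (fun i => (i < S k)%nat) u ->
  word_freq gam u = lsum (seq 0 k) (fun i => INR (occ u (S i)) * gam i).
Proof.
  intros Hu. unfold word_freq. rewrite (lsum_occ (S k)), lsum_seq_S by exact Hu.
  cbn [letter_freq]. now rewrite Rmult_0_r, Rplus_0_l.
Qed.

Section TypicalWords.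
Variables (k N : nat).
Hypothesis HN : (1 <= N)%nat.

Let q := S k.
Let Q := INR q.
Let s := Nat.sqrt N.
Let lo := (N / q - 3 * s)%nat.
Let B := (6 * s + 2)%nat.

Definition near_mean (u : list nat) (i : nat) : bool :=
  if Rlt_dec (Rabs (Q * INR (occ u (S i)) - INR N)) (3 * Q * INR s) then true else false.

Definition typical (u : list nat) : bool := forallb (near_mean u) (seq 0 k).

Let digits (u : list nat) : list nat := map (fun i => occ u (S i) - lo)%nat (seq 0 k).

Definition occ_key (u : list nat) : nat := from_digits B (digits u).

Lemma sqrt_N_pos : (1 <= s)%nat.
Proof. unfold s. destruct (Nat.sqrt_spec N) as [_ H]; [lia|]. destruct (Nat.sqrt N); lia. Qed.

Lemma near_mean_window u i : near_mean u i = true -> (lo <= occ u (S i) < lo + B)%nat.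
Proof.
  unfold near_mean. destruct (Rlt_dec _ _) as [H|]; [intros _|discriminate].
  apply Rabs_def2 in H as [H1 H2]. set (c := occ u (S i)) in *.
  assert (A1 : (q * c < N + 3 * q * s)%nat).
  { apply INR_lt. rewrite plus_INR, !mult_INR. fold Q. simpl (INR 3). lra. }
  assert (A2 : (N < q * c + 3 * q * s)%nat).
  { apply INR_lt. rewrite plus_INR, !mult_INR. fold Q. simpl (INR 3). lra. }
  pose proof (Nat.div_mod N q ltac:(unfold q; lia)).
  pose proof (Nat.mod_upper_bound N q ltac:(unfold q; lia)).
  unfold lo, B. nia.
Qed.

Lemma typical_window u i : typical u = true -> (i < k)%nat -> (lo <= occ u (S i) < lo + B)%nat.
Proof.
  intros Hu Hi. apply near_mean_window. unfold typical in Hu. rewrite forallb_forall in Hu.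
  apply Hu, in_seq; lia.
Qed.

Lemma typical_digits u : typical u = true -> List.Forall (fun d => (d < B)%nat) (digits u).
Proof.
  intros Hu. apply Forall_forall. intros d Hd. apply in_map_iff in Hd as [i [<- Hi]].
  apply in_seq in Hi. pose proof (typical_window u i Hu ltac:(lia)). lia.
Qed.

Lemma occ_key_lt u : typical u = true -> (occ_key u < B ^ k)%nat.
Proof.
  intros Hu. pose proof (from_digits_lt B (digits u) (typical_digits u Hu)) as H.
  unfold digits in H. now rewrite length_map, length_seq in H.
Qed.

Lemma occ_key_word_freq gam u v : In u (words q N) -> In v (words q N) ->
  typical u = true -> typical v = true -> occ_key u = occ_key v ->
  word_freq gam u = word_freq gam v.
Proof.
  intros Wu Wv Tu Tv E.
  assert (Hd : digits u = digits v).
  { apply (from_digits_inj B); auto using typical_digits.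
    unfold digits; now rewrite !length_map. }
  rewrite (word_freq_occ k gam u), (word_freq_occ k gam v) by (eapply in_words; eauto).
  apply lsum_ext; intros i Hi. unfold digits in Hd. rewrite map_ext_in_iff in Hd.
  specialize (Hd i Hi). apply in_seq in Hi.
  pose proof (typical_window u i Tu ltac:(lia)). pose proof (typical_window v i Tv ltac:(lia)).
  do 2 f_equal. lia.
Qed.

Lemma typical_count : INR q ^ N / 2 <= lsum (words q N) (fun u => ind (typical u)).
Proof.
  pose proof sqrt_N_pos as Hs. apply (le_INR 1) in Hs. change (INR 1) with 1 in Hs.
  assert (HQ : 1 <= Q) by (unfold Q, q; rewrite S_INR; pose proof (pos_INR k); lra).
  set (D := 9 * Q ^ 2 * INR s ^ 2).
  assert (HD : 0 < D).
  { assert (0 < Q ^ 2 * INR s ^ 2) by (apply Rmult_lt_0_compat; apply pow_lt; lra). unfold D; lra. }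
  assert (Hnear : forall u i, 1 - ind (near_mean u i) <= (Q * INR (occ u (S i)) - INR N) ^ 2 / D).
  { intros u i. unfold near_mean, ind. destruct (Rlt_dec _ _) as [_|H].
    - rewrite Rminus_eq_0. apply Rmult_le_pos; [apply pow2_ge_0 | left; now apply Rinv_0_lt_compat].
    - apply Rnot_lt_le in H. apply Rmult_le_reg_r with D; auto. unfold Rdiv.
      rewrite Rmult_assoc, Rinv_l, <- pow2_abs by lra.
      replace D with ((3 * Q * INR s) ^ 2) at 1 by (unfold D; ring).
      assert (0 <= 3 * Q * INR s) as H0 by (apply Rmult_le_pos; lra).
      pose proof (pow_incr _ _ 2 (conj H0 H)). lra. }
  assert (Hsum : lsum (words q N) (fun u => 1 - ind (typical u))
                 <= INR k * (Q ^ N * INR N * (Q - 1) / D)).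
  { eapply Rle_trans.
    - apply lsum_le; intros u _. eapply Rle_trans; [apply one_minus_ind_forallb|].
      apply lsum_le; intros i _. apply Hnear.
    - rewrite lsum_swap.
      rewrite (lsum_ext _ _ (fun _ => Q ^ N * INR N * (Q - 1) / D)), lsum_const, length_seq; [lra|].
      intros i Hi. apply in_seq in Hi. unfold Rdiv. rewrite lsum_scalr.
      unfold Q. now rewrite lsum_words_occ_variance by (unfold q; lia). }
  assert (HN4 : INR N <= 4 * INR s ^ 2).
  { destruct (Nat.sqrt_spec N) as [_ H]; [lia|]. fold s in H.
    assert (N <= 4 * s * s)%nat by nia. apply le_INR in H0. rewrite !mult_INR in H0.
    simpl in *. lra. }
  assert (Hk : INR k = Q - 1) by (unfold Q, q; rewrite S_INR; ring).
  rewrite lsum_minus, lsum_const, Rmult_1_r, length_words in Hsum.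
  fold Q in Hsum |- *. rewrite Hk in Hsum.
  assert (HQN : 0 < Q ^ N) by (apply pow_lt; lra).
  assert (Hratio : (Q - 1) ^ 2 * INR N / D <= / 2).
  { unfold Rdiv. apply Rmult_le_reg_r with D; auto. rewrite Rmult_assoc, Rinv_l, Rmult_1_r by lra.
    pose proof (pos_INR N). assert ((Q - 1) ^ 2 <= Q ^ 2) by nra.
    assert ((Q - 1) ^ 2 * INR N <= Q ^ 2 * (4 * INR s ^ 2)) by (apply Rmult_le_compat; nra).
    assert (0 <= Q ^ 2 * INR s ^ 2) by (apply Rmult_le_pos; apply pow2_ge_0).
    unfold D. lra. }
  replace ((Q - 1) * (Q ^ N * INR N * (Q - 1) / D)) with (Q ^ N * ((Q - 1) ^ 2 * INR N / D))
    in Hsum by (field; lra).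
  assert (Q ^ N * ((Q - 1) ^ 2 * INR N / D) <= Q ^ N * / 2) by (apply Rmult_le_compat_l; lra).
  unfold Rdiv at 1. lra.
Qed.

Lemma typical_pairs_le_collisions gam :
  lsum (words q N) (fun u => lsum (words q N) (fun v =>
    ind (typical u) * ind (typical v) * ind_eq (occ_key u) (occ_key v))) <= collisions k gam N 0.
Proof.
  apply lsum_le; intros u Wu; apply lsum_le; intros v Wv.
  pose proof (kronecker_bounds (word_freq gam u - word_freq gam v - 0)).
  unfold ind, ind_eq. destruct (typical u) eqn:Tu, (typical v) eqn:Tv; try lra.
  destruct (Nat.eq_dec _ _) as [E|]; [|lra].
  rewrite (occ_key_word_freq gam u v Wu Wv Tu Tv E). unfold kronecker.
  destruct (Req_EM_T _ 0) as [|Hne]; [lra|]. exfalso; apply Hne; ring.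
Qed.

Lemma window_count_le : INR (B ^ k) <= 8 ^ k * sqrt (INR N) ^ k.
Proof.
  rewrite pow_INR, <- Rpow_mult_distr. apply pow_incr. split; [apply pos_INR|].
  assert (Hs : INR s <= sqrt (INR N)).
  { rewrite <- (sqrt_pow2 (INR s)) by apply pos_INR. apply sqrt_le_1_alt.
    rewrite <- pow_INR. apply le_INR. simpl. rewrite Nat.mul_1_r. apply Nat.sqrt_spec. lia. }
  pose proof sqrt_N_pos as Hs1. apply (le_INR 1) in Hs1. change (INR 1) with 1 in Hs1.
  unfold B. rewrite plus_INR, mult_INR. simpl (INR 6). simpl (INR 2). lra.
Qed.

Lemma collisions_zero_lower_bound gam :
  / (4 * 8 ^ k) * (INR k + 1) ^ (2 * N) / sqrt (INR N) ^ k <= collisions k gam N 0.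
Proof.
  set (G := lsum (words q N) (fun u => ind (typical u))).
  pose proof typical_count as HG. fold G in HG.
  pose proof (collision_bound (words q N) typical occ_key (B ^ k) occ_key_lt) as HC. fold G in HC.
  pose proof (typical_pairs_le_collisions gam) as Hpairs.
  pose proof (collisions_nonneg k gam N 0) as Hn0.
  assert (HNr : 1 <= INR N) by (apply (le_INR 1) in HN; exact HN).
  assert (Hsq : 0 < sqrt (INR N) ^ k) by (apply pow_lt, sqrt_lt_R0; lra).
  assert (H8 : 0 < 8 ^ k) by (apply pow_lt; lra).
  pose proof window_count_le as HB.
  assert (HQN : 0 <= INR q ^ N) by (apply pow_le, pos_INR).
  assert (HG2 : (INR q ^ N / 2) ^ 2 <= G ^ 2) by (apply pow_incr; lra).
  assert (HBn : INR (B ^ k) * collisions k gam N 0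
                <= 8 ^ k * sqrt (INR N) ^ k * collisions k gam N 0)
    by (apply Rmult_le_compat_r; auto).
  assert (HBp : INR (B ^ k) * lsum (words q N) (fun u => lsum (words q N) (fun v =>
      ind (typical u) * ind (typical v) * ind_eq (occ_key u) (occ_key v)))
      <= INR (B ^ k) * collisions k gam N 0)
    by (apply Rmult_le_compat_l; [apply pos_INR | exact Hpairs]).
  replace (INR k + 1) with (INR q) by (unfold q; now rewrite S_INR).
  rewrite Nat.mul_comm, pow_mult.
  apply Rmult_le_reg_r with (4 * 8 ^ k * sqrt (INR N) ^ k); [nra|].
  replace (/ (4 * 8 ^ k) * (INR q ^ N) ^ 2 / sqrt (INR N) ^ k * (4 * 8 ^ k * sqrt (INR N) ^ k))
    with (4 * (INR q ^ N / 2) ^ 2) by (field; lra).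
  nra.
Qed.

End TypicalWords.

(** * Moving one letter: A_N(gamma_j) against A_N(0) *)

(* The sum, over the positions of u carrying the letter a, of h applied to u with that letter
   replaced by b. *)
Fixpoint replace_sum (a b : nat) (h : list nat -> R) (u : list nat) : R :=
  match u with
  | nil => 0
  | i :: w => ind_eq i a * h (b :: w) + replace_sum a b (fun w' => h (i :: w')) w
  end.

Lemma replace_sum_ext a b h1 h2 u :
  (forall w, h1 w = h2 w) -> replace_sum a b h1 u = replace_sum a b h2 u.
Proof.
  revert h1 h2; induction u as [|i u IH]; intros h1 h2 H; simpl; auto.
  rewrite H. f_equal. apply IH. auto.
Qed.

Lemma lsum_words_replace_sum q N a b h : (a < q)%nat -> (b < q)%nat ->
  lsum (words q N) (replace_sum a b h) = lsum (words q N) (fun u => INR (occ u b) * h u).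
Proof.
  intros Ha Hb. revert h. induction N as [|N IH]; intros h.
  - rewrite !lsum_words_0. simpl; ring.
  - rewrite !lsum_words_S.
    transitivity (lsum (words q N) (fun w =>
      h (b :: w) + lsum (seq 0 q) (fun i => replace_sum a b (fun w' => h (i :: w')) w))).
    + apply lsum_ext; intros w _. simpl replace_sum. now rewrite (lsum_ind_eq_split q a _ _ Ha).
    + rewrite lsum_plus, lsum_swap.
      rewrite (lsum_ext (seq 0 q) _
                 (fun i => lsum (words q N) (fun u => INR (occ u b) * h (i :: u))))
        by (intros; apply IH).
      rewrite <- lsum_swap, <- lsum_plus. apply lsum_ext; intros w _.
      rewrite (lsum_ext (seq 0 q) (fun i => INR (occ (i :: w) b) * h (i :: w))
                        (fun i => ind_eq i b * h (b :: w) + INR (occ w b) * h (i :: w))).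
      * now rewrite (lsum_ind_eq_split q b _ _ Hb).
      * intros i _. rewrite INR_occ_cons. unfold ind_eq. destruct (Nat.eq_dec i b); subst; ring.
Qed.

Lemma replace_sum_kronecker gam a b u c :
  replace_sum a b (fun w => kronecker (word_freq gam w - c)) u =
  INR (occ u a) * kronecker (word_freq gam u + letter_freq gam b - letter_freq gam a - c).
Proof.
  revert c; induction u as [|i w IH]; intros c; simpl replace_sum; [simpl; ring|].
  change (word_freq gam (?x :: ?v)) with (letter_freq gam x + word_freq gam v).
  rewrite (replace_sum_ext a b _ (fun w' => kronecker (word_freq gam w' - (c - letter_freq gam i))))
    by (intros; f_equal; ring).
  rewrite IH, INR_occ_cons. unfold ind_eq. destruct (Nat.eq_dec i a) as [->|].
  - rewrite Rmult_plus_distr_r, !Rmult_1_l. f_equal.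
    + f_equal; ring.
    + do 2 f_equal; ring.
  - rewrite Rmult_0_l, !Rplus_0_l. do 2 f_equal. ring.
Qed.

Lemma double_count k gam N j : (j < k)%nat ->
  lsum (words (S k) N) (fun u => lsum (words (S k) N) (fun v =>
    INR (occ u O) * kronecker (word_freq gam u - word_freq gam v - 0))) =
  lsum (words (S k) N) (fun u => lsum (words (S k) N) (fun v =>
    INR (occ u (S j)) * kronecker (word_freq gam u - word_freq gam v - gam j))).
Proof.
  intros Hj. rewrite lsum_swap, (lsum_swap _ _ (fun u v => INR (occ u (S j)) * _)).
  apply lsum_ext; intros v _.
  transitivity (lsum (words (S k) N)
    (replace_sum O (S j) (fun w => kronecker (word_freq gam w - (word_freq gam v + gam j))))).
  - apply lsum_ext; intros u _. rewrite replace_sum_kronecker. simpl letter_freq.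
    f_equal. f_equal. ring.
  - rewrite lsum_words_replace_sum by lia. apply lsum_ext; intros u _. f_equal. f_equal. ring.
Qed.

Lemma exp_le_exp x y : x <= y -> exp x <= exp y.
Proof. intros [H | ->]; [left; now apply exp_increasing | lra]. Qed.

Lemma exp_INR_mult n x : exp (INR n * x) = exp x ^ n.
Proof.
  induction n as [|n IH]; [simpl; now rewrite Rmult_0_l, exp_0|].
  rewrite S_INR, Rmult_plus_distr_r, Rmult_1_l, exp_plus, IH. simpl; ring.
Qed.

Lemma exp_le_quadratic x : Rabs x <= / 2 -> exp x <= 1 + x + 2 * x ^ 2.
Proof.
  intros Hx. apply Rabs_le_between in Hx.
  assert (H1 := exp_ineq1_le (- x)). assert (Hp := exp_pos x).
  assert (E : exp x * exp (- x) = 1) by (rewrite <- exp_plus, Rplus_opp_r; apply exp_0).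
  assert (0 <= x ^ 2 * (1 - 2 * x)) by (apply Rmult_le_pos; [apply pow2_ge_0 | lra]).
  nra.
Qed.

Lemma lsum_words_exp_occ q N b l : (b < q)%nat ->
  lsum (words q N) (fun u => exp (l * INR (occ u b))) = (INR q - 1 + exp l) ^ N.
Proof.
  intros Hb. induction N as [|N IH]; [rewrite lsum_words_0; simpl; now rewrite Rmult_0_r, exp_0|].
  rewrite lsum_words_S. simpl pow. rewrite <- IH, <- lsum_scal. apply lsum_ext; intros w _.
  rewrite (lsum_ext _ _ (fun i =>
    ind_eq i b * ((exp l - 1) * exp (l * INR (occ w b))) + exp (l * INR (occ w b)))).
  - rewrite (lsum_ind_eq_split q b _ _ Hb), lsum_const, length_seq. ring.
  - intros i _. rewrite INR_occ_cons, Rmult_plus_distr_l, exp_plus. unfold ind_eq.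
    destruct (Nat.eq_dec i b); [rewrite Rmult_1_r | rewrite Rmult_0_r, exp_0]; ring.
Qed.

Definition ind_lt (x y : R) : R := if Rlt_dec x y then 1 else 0.

Lemma chernoff_upper_tail q N b th l : (b < q)%nat -> 0 <= l ->
  lsum (words q N) (fun u => ind_lt th (INR (occ u b))) <= exp (- l * th) * (INR q - 1 + exp l) ^ N.
Proof.
  intros Hb Hl. rewrite <- (lsum_words_exp_occ q N b _ Hb), <- lsum_scal.
  apply lsum_le; intros u _. rewrite <- exp_plus. unfold ind_lt. destruct (Rlt_dec _ _).
  - rewrite <- exp_0. apply exp_le_exp. nra.
  - left; apply exp_pos.
Qed.

Lemma chernoff_lower_tail q N b th l : (b < q)%nat -> 0 <= l ->
  lsum (words q N) (fun u => ind_lt (INR (occ u b)) th)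
  <= exp (l * th) * (INR q - 1 + exp (- l)) ^ N.
Proof.
  intros Hb Hl. rewrite <- (lsum_words_exp_occ q N b _ Hb), <- lsum_scal.
  apply lsum_le; intros u _. rewrite <- exp_plus. unfold ind_lt. destruct (Rlt_dec _ _).
  - rewrite <- exp_0. apply exp_le_exp. nra.
  - left; apply exp_pos.
Qed.

Definition rho (Q d : R) : R := exp (- (d ^ 2 / (8 * Q))).

(* sg * (d / 4) is the Chernoff parameter used for the tails below. *)
Lemma chernoff_factor_bound Q d sg : 1 <= Q -> 0 < d <= 1 -> sg = 1 \/ sg = -1 ->
  (Q - 1 + exp (sg * (d / 4))) * exp (- sg * (d / 4) * ((1 + sg * d) / Q)) <= Q * rho Q d.
Proof.
  intros HQ Hd Hs. set (l := sg * (d / 4)).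
  assert (Hl : Rabs l <= / 2) by (unfold l; apply Rabs_le; destruct Hs as [-> | ->]; lra).
  assert (H1 := exp_le_quadratic l Hl).
  assert (H2 := exp_ineq1_le ((l + 2 * l ^ 2) / Q)).
  assert (Q - 1 + exp l <= Q * exp ((l + 2 * l ^ 2) / Q)).
  { assert (Q * (1 + (l + 2 * l ^ 2) / Q) = Q + l + 2 * l ^ 2) by (field; lra). nra. }
  unfold rho.
  apply Rle_trans with (Q * exp ((l + 2 * l ^ 2) / Q) * exp (- sg * (d / 4) * ((1 + sg * d) / Q))).
  - apply Rmult_le_compat_r; [left; apply exp_pos | auto].
  - rewrite Rmult_assoc, <- exp_plus. apply Rmult_le_compat_l; [lra|]. apply exp_le_exp.
    unfold l. destruct Hs as [-> | ->]; apply Rmult_le_reg_r with Q; try lra;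
      field_simplify; try lra; nra.
Qed.

Lemma occ_upper_tail k N j d : (j < k)%nat -> 0 < d <= 1 ->
  lsum (words (S k) N) (fun u => ind_lt ((1 + d) * (INR N / INR (S k))) (INR (occ u (S j))))
  <= (INR (S k) * rho (INR (S k)) d) ^ N.
Proof.
  intros Hj Hd. set (Q := INR (S k)).
  assert (HQ : 1 <= Q) by (unfold Q; rewrite S_INR; pose proof (pos_INR k); lra).
  eapply Rle_trans; [apply (chernoff_upper_tail (S k) N (S j) _ (1 * (d / 4))); [lia | lra]|].
  replace (- (1 * (d / 4)) * ((1 + d) * (INR N / Q)))
    with (INR N * (- 1 * (d / 4) * ((1 + 1 * d) / Q)))
    by (field; lra).
  rewrite exp_INR_mult, <- Rpow_mult_distr. apply pow_incr. split.
  - apply Rmult_le_pos; [left; apply exp_pos|]. pose proof (exp_pos (1 * (d / 4))). fold Q. lra.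
  - rewrite Rmult_comm. fold Q. apply chernoff_factor_bound; auto.
Qed.

Lemma occ_lower_tail k N d : 0 < d <= 1 ->
  lsum (words (S k) N) (fun u => ind_lt (INR (occ u O)) ((1 - d) * (INR N / INR (S k))))
  <= (INR (S k) * rho (INR (S k)) d) ^ N.
Proof.
  intros Hd. set (Q := INR (S k)).
  assert (HQ : 1 <= Q) by (unfold Q; rewrite S_INR; pose proof (pos_INR k); lra).
  eapply Rle_trans; [apply (chernoff_lower_tail (S k) N O _ (d / 4)); [lia | lra]|].
  replace (d / 4 * ((1 - d) * (INR N / Q))) with (INR N * (- (-1) * (d / 4) * ((1 + -1 * d) / Q)))
    by (field; lra).
  replace (- (d / 4)) with (-1 * (d / 4)) by ring.
  rewrite exp_INR_mult, <- Rpow_mult_distr. apply pow_incr. split.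
  - apply Rmult_le_pos; [left; apply exp_pos|]. pose proof (exp_pos (-1 * (d / 4))). fold Q. lra.
  - rewrite Rmult_comm. fold Q. apply chernoff_factor_bound; auto.
Qed.

Lemma lsum2_truncate_lower {A} (l : list A) (c : A -> R) (w : A -> A -> R) th :
  0 <= th -> (forall a b, 0 <= w a b <= 1) -> (forall a, 0 <= c a) ->
  th * lsum l (fun a => lsum l (w a))
    - th * INR (length l) * lsum l (fun a => ind_lt (c a) th)
  <= lsum l (fun a => lsum l (fun b => c a * w a b)).
Proof.
  intros Hth Hw Hc.
  apply Rle_trans with (lsum l (fun a => lsum l (fun b => th * w a b - th * ind_lt (c a) th))).
  - apply Req_le. rewrite <- !lsum_scal, <- lsum_minus. apply lsum_ext; intros a _.
    rewrite lsum_minus, lsum_scal, lsum_const. ring.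
  - apply lsum_le; intros a _; apply lsum_le; intros b _.
    specialize (Hw a b). specialize (Hc a). unfold ind_lt. destruct (Rlt_dec (c a) th); nra.
Qed.

Lemma lsum2_truncate_upper {A} (l : list A) (c : A -> R) (w : A -> A -> R) th M :
  0 <= th -> (forall a b, 0 <= w a b <= 1) -> (forall a, In a l -> 0 <= c a <= M) ->
  lsum l (fun a => lsum l (fun b => c a * w a b))
  <= th * lsum l (fun a => lsum l (w a))
     + M * INR (length l) * lsum l (fun a => ind_lt th (c a)).
Proof.
  intros Hth Hw Hc.
  apply Rle_trans with (lsum l (fun a => lsum l (fun b => th * w a b + M * ind_lt th (c a)))).
  - apply lsum_le; intros a Ha; apply lsum_le; intros b _.
    specialize (Hw a b). specialize (Hc a Ha). unfold ind_lt. destruct (Rlt_dec th (c a)); nra.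
  - apply Req_le. rewrite <- !lsum_scal, <- lsum_plus. apply lsum_ext; intros a _.
    rewrite lsum_plus, lsum_scal, lsum_const. ring.
Qed.

Section LetterShift.
Variables (k N j : nat) (gam : nat -> R) (d : R).
Hypotheses (Hj : (j < k)%nat) (Hd : 0 < d <= 1).

Let Q := INR (S k).
Let m := INR N / Q.
Let W := words (S k) N.
Let Z := Q ^ (2 * N) * rho Q d ^ N.

Lemma collisions_sandwich :
  (1 - d) * m * collisions k gam N 0 - (1 - d) * m * Z
  <= (1 + d) * m * collisions k gam N (gam j) + INR N * Z.
Proof.
  assert (HQ : 0 < Q) by (apply (lt_INR 0); lia).
  assert (Hm : 0 <= m) by (apply Rdiv_le_0_compat; [apply pos_INR | lra]).
  assert (HQN : 0 <= Q ^ N) by (apply pow_le; lra).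
  assert (HZ : Q ^ N * (Q * rho Q d) ^ N = Z)
    by (unfold Z; rewrite Rpow_mult_distr, Nat.mul_comm, pow_mult; ring).
  pose proof (lsum2_truncate_lower W (fun u => INR (occ u O))
    (fun u v => kronecker (word_freq gam u - word_freq gam v - 0)) ((1 - d) * m)
    ltac:(nra) (fun _ _ => kronecker_bounds _) (fun _ => pos_INR _)) as Hlo.
  assert (Hocc : forall u, In u W -> 0 <= INR (occ u (S j)) <= INR N).
  { intros u Hu. split; [apply pos_INR|]. apply le_INR.
    destruct (in_words _ _ _ Hu) as [<- _]. apply count_occ_bound. }
  pose proof (lsum2_truncate_upper W (fun u => INR (occ u (S j)))
    (fun u v => kronecker (word_freq gam u - word_freq gam v - gam j)) ((1 + d) * m) (INR N)
    ltac:(nra) (fun _ _ => kronecker_bounds _) Hocc) as Hhi.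
  assert (HW : INR (length W) = Q ^ N) by apply length_words.
  cbv beta in Hlo, Hhi. rewrite HW in Hlo, Hhi.
  pose proof (double_count k gam N j Hj) as Hdc. fold W in Hdc. rewrite Hdc in Hlo.
  pose proof (occ_lower_tail k N d Hd) as Tlo. pose proof (occ_upper_tail k N j d Hj Hd) as Thi.
  fold Q W m in Tlo, Thi.
  assert ((1 - d) * m * Q ^ N * lsum W (fun u => ind_lt (INR (occ u O)) ((1 - d) * m))
          <= (1 - d) * m * Z).
  { rewrite <- HZ, Rmult_assoc. apply Rmult_le_compat_l; [nra|]. now apply Rmult_le_compat_l. }
  assert (INR N * Q ^ N * lsum W (fun u => ind_lt ((1 + d) * m) (INR (occ u (S j)))) <= INR N * Z).
  { rewrite <- HZ, Rmult_assoc. apply Rmult_le_compat_l; [apply pos_INR|].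
    now apply Rmult_le_compat_l. }
  unfold collisions. fold W. lra.
Qed.

Lemma collisions_shift_core : (1 <= N)%nat ->
  2 * Q * Z <= d * collisions k gam N 0 ->
  (1 - 3 * d) * collisions k gam N 0 <= collisions k gam N (gam j).
Proof.
  intros HN Hsmall. pose proof collisions_sandwich as Hsw.
  assert (HQ : 1 <= Q) by (unfold Q; rewrite S_INR; pose proof (pos_INR k); lra).
  assert (Hm : 0 < m) by (apply Rdiv_lt_0_compat; [apply (lt_INR 0); lia | lra]).
  assert (HZ : 0 <= Z) by (apply Rmult_le_pos; apply pow_le; [lra | left; apply exp_pos]).
  pose proof (collisions_nonneg k gam N 0).
  set (n0 := collisions k gam N 0) in *. set (nj := collisions k gam N (gam j)) in *.
  assert (Hdiv : (1 - d) * n0 - (1 - d) * Z <= (1 + d) * nj + Q * Z).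
  { apply Rmult_le_reg_l with m; auto.
    replace (INR N) with (m * Q) in Hsw by (unfold m; field; lra). nra. }
  nra.
Qed.

End LetterShift.

(* exp y >= (y / (k+1))^(k+1) lets the exponential decay of rho^N absorb sqrt(N)^k. *)
Lemma rho_pow_mul_sqrt_pow_le Q d k N : 0 < Q -> 0 < d -> (1 <= N)%nat ->
  rho Q d ^ N * sqrt (INR N) ^ k <= (8 * Q * INR (S k) / d ^ 2) ^ S k / INR N.
Proof.
  intros HQ Hd HN. set (a := d ^ 2 / (8 * Q)). set (n := INR (S k)).
  assert (Ha : 0 < a) by (unfold a; apply Rdiv_lt_0_compat; [apply pow_lt|]; lra).
  assert (Hn : 0 < n) by (apply (lt_INR 0); lia).
  assert (HNr : 1 <= INR N) by (apply (le_INR 1); lia).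
  assert (Hrho : rho Q d ^ N = / exp (a * INR N)).
  { unfold rho. rewrite <- exp_INR_mult, <- exp_Ropp. f_equal. unfold a. ring. }
  assert (Hexp : (a * INR N / n) ^ S k <= exp (a * INR N)).
  { replace (a * INR N) with (n * (a * INR N / n)) at 2 by (field; lra).
    change (exp (n * ?y)) with (exp (INR (S k) * y)). rewrite exp_INR_mult. apply pow_incr. split.
    - apply Rdiv_le_0_compat; [apply Rmult_le_pos|]; lra.
    - pose proof (exp_ineq1_le (a * INR N / n)). lra. }
  assert (Hsq : sqrt (INR N) ^ k <= INR N ^ k).
  { apply pow_incr. split; [apply sqrt_pos|]. rewrite <- (sqrt_pow2 (INR N)) at 2 by lra.
    apply sqrt_le_1_alt. nra. }
  assert (Hpos : 0 < (a * INR N / n) ^ S k)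
    by (apply pow_lt, Rdiv_lt_0_compat; [apply Rmult_lt_0_compat|]; lra).
  rewrite Hrho. apply Rle_trans with (INR N ^ k / (a * INR N / n) ^ S k).
  - unfold Rdiv. rewrite Rmult_comm.
    apply Rmult_le_compat; [apply pow_le, sqrt_pos | apply Rlt_le, Rinv_0_lt_compat, exp_pos
                           | exact Hsq | apply Rinv_le_contravar; auto].
  - apply Req_le.
    replace (a * INR N / n) with (INR N * / (n / a)) by (field; lra).
    replace (8 * Q * n / d ^ 2) with (n / a) by (unfold a; field; lra).
    rewrite Rpow_mult_distr, pow_inv, <- tech_pow_Rmult.
    assert (INR N ^ k <> 0) by (apply pow_nonzero; lra).
    assert ((n / a) ^ S k <> 0) by (apply pow_nonzero, Rgt_not_eq, Rdiv_lt_0_compat; lra).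
    field. lra.
Qed.

Lemma rho_pow_decay k d c : 0 < d -> 0 < c -> exists N0 : nat, forall N : nat, (N0 <= N)%nat ->
  (1 <= N)%nat /\ 2 * INR (S k) * rho (INR (S k)) d ^ N * sqrt (INR N) ^ k <= d * c.
Proof.
  intros Hd Hc. set (Q := INR (S k)).
  assert (HQ : 0 < Q) by (apply (lt_INR 0); lia).
  set (C := (8 * Q * Q / d ^ 2) ^ S k).
  destruct (INR_unbounded (2 * Q * C / (d * c))) as [n Hn].
  exists (Nat.max 1 n). intros N HN. split; [lia|].
  assert (HNr : 1 <= INR N) by (apply (le_INR 1); lia).
  assert (HnN : INR n <= INR N) by (apply le_INR; lia).
  pose proof (rho_pow_mul_sqrt_pow_le Q d k N HQ Hd ltac:(lia)) as Hle. fold Q C in Hle.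
  assert (Hdc : 0 < d * c) by (apply Rmult_lt_0_compat; auto).
  assert (Hlt : 2 * Q * C < d * c * INR N).
  { apply Rmult_lt_reg_r with (/ (d * c)); [now apply Rinv_0_lt_compat|].
    replace (d * c * INR N * / (d * c)) with (INR N) by (field; lra). unfold Rdiv in Hn. lra. }
  apply Rle_trans with (2 * Q * (C / INR N)).
  - rewrite Rmult_assoc. apply Rmult_le_compat_l; lra.
  - apply Rmult_le_reg_r with (INR N); [lra|]. unfold Rdiv.
    replace (2 * Q * (C * / INR N) * INR N) with (2 * Q * C) by (field; lra). lra.
Qed.

Lemma collisions_shift_lower_bound k gam N j d : (j < k)%nat -> 0 < d <= 1 -> (1 <= N)%nat ->
  2 * INR (S k) * rho (INR (S k)) d ^ N * sqrt (INR N) ^ k <= d * / (4 * 8 ^ k) ->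
  (1 - 3 * d) * collisions k gam N 0 <= collisions k gam N (gam j).
Proof.
  intros Hj Hd HN Hdecay. apply collisions_shift_core; auto.
  pose proof (collisions_zero_lower_bound k N HN gam) as Hlow.
  set (c := / (4 * 8 ^ k)) in *. set (X := (INR k + 1) ^ (2 * N)) in Hlow.
  set (sN := sqrt (INR N) ^ k) in *.
  assert (HsN : 0 < sN) by (apply pow_lt, sqrt_lt_R0, (lt_INR 0); lia).
  assert (HX : 0 <= X) by (apply pow_le; pose proof (pos_INR k); lra).
  replace (INR (S k)) with (INR k + 1) by (now rewrite S_INR). fold X.
  assert (c * X <= collisions k gam N 0 * sN).
  { apply Rmult_le_reg_r with (/ sN); [now apply Rinv_0_lt_compat|].
    replace (collisions k gam N 0 * sN * / sN) with (collisions k gam N 0) by (field; lra).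
    exact Hlow. }
  rewrite S_INR in Hdecay.
  apply Rmult_le_reg_r with sN; auto. nra.
Qed.

Theorem lemma4p2 :
  (* (a) A_N(0) >>_k (k+1)^{2N} N^{-k/2}, the implied constant depending only on k *)
  (forall k : nat, exists c : R, 0 < c /\
     forall (gam : nat -> R) (N : nat), distinct_freqs k gam -> (1 <= N)%nat ->
       exists L : R, A_N_is k gam N 0 L /\
         c * (INR k + 1) ^ (2 * N) / (sqrt (INR N)) ^ k <= L)
  /\
  (* (b) for eps > 0 and j in {1..k}, for N large in terms of eps and k,
         A_N(gamma_j) >= (1 - eps) A_N(0) *)
  (forall (k : nat) (eps : R), 0 < eps -> exists N0 : nat,
     forall (gam : nat -> R) (j N : nat), distinct_freqs k gam -> (j < k)%nat ->
       (N0 <= N)%nat ->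
       exists L0 Lj : R, A_N_is k gam N 0 L0 /\ A_N_is k gam N (gam j) Lj /\
         (1 - eps) * L0 <= Lj).
Proof.
  (* Neither part uses that the frequencies are distinct. *)
  assert (Hc : forall k, 0 < / (4 * 8 ^ k))
    by (intros k; apply Rinv_0_lt_compat; pose proof (pow_lt 8 k); lra).
  split.
  - intros k. exists (/ (4 * 8 ^ k)). split; [apply Hc|].
    intros gam N _ HN. exists (collisions k gam N 0).
    split; [apply A_N_is_collisions | now apply collisions_zero_lower_bound].
  - intros k eps Heps. set (d := Rmin eps 1 / 3).
    assert (Hd : 0 < d <= 1)
      by (unfold d; pose proof (Rmin_r eps 1); pose proof (Rmin_glb_lt eps 1 0); lra).
    assert (Hd3 : 3 * d <= eps) by (unfold d; pose proof (Rmin_l eps 1); lra).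
    destruct (rho_pow_decay k d _ ltac:(lra) (Hc k)) as [N0 HN0].
    exists N0. intros gam j N _ Hj HN. destruct (HN0 N HN) as [HN1 Hdecay].
    exists (collisions k gam N 0), (collisions k gam N (gam j)).
    split; [apply A_N_is_collisions|]. split; [apply A_N_is_collisions|].
    pose proof (collisions_shift_lower_bound k gam N j d Hj Hd HN1 Hdecay).
    pose proof (collisions_nonneg k gam N 0). nra.
Qed.
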